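(* Let $|\psi\rangle,|\phi\rangle,|e\rangle,|f\rangle$ be unit vectors in $\mathbb{C}^2$ and let $\mathcal{R}$ be the set of random unitary channels on $\mathcal{L}(\mathbb{C}^2)$. Then $$\max_{\Psi\in\mathcal{R}}\left\{\frac12\langle e|\Psi(|\psi\rangle\langle\psi|)|e\rangle+\frac12\langle f|\Psi(|\phi\rangle\langle\phi|)|f\rangle\right\}=\frac12\left(1+|\langle\psi|\phi\rangle||\langle e|f\rangle|+\sqrt{(1-|\langle\psi|\phi\rangle|^2)(1-|\langle e|f\rangle|^2)}\right).$$ The right-hand side equals $1$ if and only if $|\langle\psi|\phi\rangle|=|\langle e|f\rangle|$; consequently, $(|\psi\rangle,|\phi\rangle)$ is jointly convertible into $(|e\rangle,|f\rangle)$ within $\mathcal{R}$ if and only if $|\langle\psi|\phi\rangle|=|\langle e|f\rangle|$.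
   Context: $\mathcal{R}$ consists of the maps $A\mapsto\sum_xp_xU_xAU_x^\dagger$ with $\{p_x\}$ a finite probability distribution and $U_x$ unitary operators on $\mathbb{C}^2$. For a set $\mathcal{X}$ of quantum channels, $(|\psi\rangle,|\phi\rangle)$ is jointly convertible into $(|e\rangle,|f\rangle)$ within $\mathcal{X}$ if there exists $\Psi\in\mathcal{X}$ with $\Psi(|\psi\rangle\langle\psi|)=|e\rangle\langle e|$ and $\Psi(|\phi\rangle\langle\phi|)=|f\rangle\langle f|$. *)

From mathcomp Require Import all_boot all_algebra spectral.
From mathcomp Require Import reals.
From mathcomp.real_closed Require Export complex.
Export GRing.Theory Num.Theory Num.Def.
Set Implicit Arguments. Unset Strict Implicit. Unset Printing Implicit Defensive.
Local Open Scope ring_scope.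
Local Open Scope sesquilinear_scope.

Section Qubit.
Variable R : realType.
Local Notation C := (R[i]).

Definition braket (u v : 'cV[C]_2) : C := (u ^t* *m v) 0 0.

Definition unit_vec (u : 'cV[C]_2) : Prop := braket u u = 1.

Definition ketbra (u : 'cV[C]_2) : 'M[C]_2 := u *m u ^t*.

Definition expect (u : 'cV[C]_2) (A : 'M[C]_2) : C := (u ^t* *m A *m u) 0 0.

Definition random_unitary_channel (Psi : 'M[C]_2 -> 'M[C]_2) : Prop :=
  exists (n : nat) (p : 'I_n -> C) (U : 'I_n -> 'M[C]_2),
    [/\ (forall x, 0 <= p x),
        \sum_(x < n) p x = 1,
        (forall x, U x \is unitarymx) &
        (forall A, Psi A = \sum_(x < n) p x *: (U x *m A *m (U x) ^t*))].

Definition jointly_convertible (X : ('M[C]_2 -> 'M[C]_2) -> Prop)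
  (psi phi e f : 'cV[C]_2) : Prop :=
  exists Psi, X Psi /\ Psi (ketbra psi) = ketbra e /\ Psi (ketbra phi) = ketbra f.

Definition success (Psi : 'M[C]_2 -> 'M[C]_2) (psi phi e f : 'cV[C]_2) : C :=
  2^-1 * expect e (Psi (ketbra psi)) + 2^-1 * expect f (Psi (ketbra phi)).

Definition opt_value (psi phi e f : 'cV[C]_2) : C :=
  2^-1 * (1 + `|braket psi phi| * `|braket e f|
          + sqrtC ((1 - `|braket psi phi| ^+ 2) * (1 - `|braket e f| ^+ 2))).

End Qubit.

(* For a unitary U put x = U psi, y = U phi, and let E, F, X, Y be the projectors
   onto e, f, x, y.  Then
     2 (|<e|x>|^2 + |<f|y>|^2) - 2 = tr ((E + F - 1)(X + Y - 1)) + tr ((E - F)(X - Y)),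
   and in dimension two tr ((E + F - 1)^2) = 2 |<e|f>|^2 and tr ((E - F)^2) =
   2 (1 - |<e|f>|^2), likewise for X and Y.  Cauchy-Schwarz for the Hilbert-Schmidt
   inner product thus bounds the success of every unitary, hence of every mixture of
   unitaries, by the closed form.  For the converse fix phases so that
   a = <psi|phi> and b = <e|f> are nonnegative and write psi, phi = c_a m +- s_a n,
   e, f = c_b m' +- s_b n' in orthonormal frames, where c_t = sqrt ((1 + t) / 2) and
   s_t = sqrt ((1 - t) / 2); the unitary sending (m, n) to (m', n') has overlap
   c_a c_b + s_a s_b with both targets, and that number squared is the closed form.
   Finally sqrt ((1 - a^2)(1 - b^2)) <= 1 - a b with equality iff a = b, and a
   channel converting both states has success 1. *)

From mathcomp Require Import all_boot all_order all_algebra spectral reals.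
From mathcomp Require Import ring.
Set Implicit Arguments. Unset Strict Implicit. Unset Printing Implicit Defensive.
Import Order.TTheory GRing.Theory Num.Theory.
Local Open Scope ring_scope.
Local Open Scope sesquilinear_scope.

Lemma mxtrace_mulDB1 (K : comNzRingType) n (E F X Y : 'M[K]_n) :
  \tr ((E + F - 1%:M) *m (X + Y - 1%:M)) =
  \tr (E *m X) + \tr (E *m Y) + \tr (F *m X) + \tr (F *m Y)
  + (n%:R - (\tr E + \tr F + \tr X + \tr Y)).
Proof.
rewrite !(mulmxDl, mulmxDr, mulmxN, mulNmx, mulmx1, mul1mx, opprK).
by rewrite !(mxtraceD, raddfN) /= mxtrace1; ring.
Qed.

Lemma mxtrace_mulBB (K : comNzRingType) n (E F X Y : 'M[K]_n) :
  \tr ((E - F) *m (X - Y)) = \tr (E *m X) - \tr (E *m Y) - \tr (F *m X) + \tr (F *m Y).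
Proof.
by rewrite !(mulmxDl, mulmxDr, mulmxN, mulNmx, opprK) !(mxtraceD, raddfN) /=; ring.
Qed.

Section HilbertSchmidt.
Variable C : numClosedFieldType.

Lemma mxtrace_mul_trmxC m n (A B : 'M[C]_(m, n)) :
  \tr (A *m B^t*) = dotmx (mxvec A) (mxvec B).
Proof.
transitivity (\sum_i \sum_j A i j * (B i j)^*).
  by apply: eq_bigr => i _; rewrite mxE; apply: eq_bigr => j _; rewrite !mxE.
rewrite pair_bigA dotmxE mxE (reindex _ (curry_mxvec_bij _ _)) /=.
by apply: eq_bigr => -[i j] _; rewrite !mxE !mxvecE.
Qed.

Lemma mxtrace_CauchySchwarz m n (A B : 'M[C]_(m, n)) :
  `|\tr (A *m B^t*)| <= sqrtC (\tr (A *m A^t*)) * sqrtC (\tr (B *m B^t*)).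
Proof. by rewrite !mxtrace_mul_trmxC; exact: (CauchySchwarz_sqrt _ _ _).1. Qed.

Lemma mxtrace_herm_CauchySchwarz n (A B : 'M[C]_n) : A^t* = A -> B^t* = B ->
  \tr (A *m B) <= sqrtC (\tr (A *m A)) * sqrtC (\tr (B *m B)).
Proof.
move=> hA hB; have real_tr : \tr (A *m B) \is Num.real.
  rewrite CrealE -trace_map_mx -mxtrace_tr map_trmx trmx_mul map_mxM hA hB.
  by rewrite mxtrace_mulC.
apply: le_trans (real_ler_norm real_tr) _.
by have := mxtrace_CauchySchwarz A B; rewrite hA hB.
Qed.

End HilbertSchmidt.

Section OptimalOverlap.
Variable C : numClosedFieldType.
Implicit Types a b : C.

(* For a = cos t these are cos (t / 2) and sin (t / 2). *)
Definition hcos a := sqrtC ((1 + a) / 2).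
Definition hsin a := sqrtC ((1 - a) / 2).

Definition optimal_amplitude a b := hcos a * hcos b + hsin a * hsin b.

Definition optimal_overlap a b :=
  2^-1 * (1 + a * b + sqrtC ((1 - a ^+ 2) * (1 - b ^+ 2))).

Lemma hcos_ge0 a : -1 <= a -> 0 <= hcos a.
Proof. by move=> a_ge; rewrite sqrtC_ge0 divr_ge0 ?ler0n // -lerBlDl sub0r. Qed.

Lemma hsin_ge0 a : a <= 1 -> 0 <= hsin a.
Proof. by move=> a_le; rewrite sqrtC_ge0 divr_ge0 ?ler0n // subr_ge0. Qed.

Lemma sqr_ile1 a : -1 <= a <= 1 -> a ^+ 2 <= 1.
Proof.
move=> /andP[a_ge a_le]; rewrite -subr_ge0.
rewrite (_ : 1 - a ^+ 2 = (1 + a) * (1 - a)); last by ring.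
by rewrite mulr_ge0 // ?subr_ge0 // -lerBlDl sub0r.
Qed.

Lemma sqr_optimal_amplitude a b : -1 <= a <= 1 -> -1 <= b <= 1 ->
  optimal_amplitude a b ^+ 2 = optimal_overlap a b.
Proof.
move=> a_bnd b_bnd; have /andP[a_ge a_le] := a_bnd; have /andP[b_ge b_le] := b_bnd.
set d := (1 - a ^+ 2) * (1 - b ^+ 2).
have d_ge0 : 0 <= d by rewrite mulr_ge0 // subr_ge0 sqr_ile1.
have cross : hcos a * hsin a * (hcos b * hsin b) = 4^-1 * sqrtC d.
  apply: (pexpIrn (isT : (0 < 2)%N)).
  - by rewrite nnegrE !mulr_ge0 ?hsin_ge0 ?hcos_ge0.
  - by rewrite nnegrE mulr_ge0 ?invr_ge0 ?ler0n ?sqrtC_ge0.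
  by rewrite /= !exprMn !sqrtCK /d; field.
have -> : optimal_amplitude a b ^+ 2 = hcos a ^+ 2 * hcos b ^+ 2
    + hsin a ^+ 2 * hsin b ^+ 2 + 2 * (hcos a * hsin a * (hcos b * hsin b)).
  by rewrite /optimal_amplitude; ring.
by rewrite cross /hcos /hsin !sqrtCK /optimal_overlap -/d; field.
Qed.

Lemma optimal_overlap_leif a b : -1 <= a <= 1 -> -1 <= b <= 1 ->
  optimal_overlap a b <= 1 ?= iff (a == b).
Proof.
move=> a_bnd b_bnd; have /andP[a_ge a_le] := a_bnd; have /andP[b_ge b_le] := b_bnd.
set d := (1 - a ^+ 2) * (1 - b ^+ 2); set e := 1 - a * b.
have d_ge0 : 0 <= d by rewrite mulr_ge0 // subr_ge0 sqr_ile1.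
have e_ge0 : 0 <= e.
  rewrite (_ : e = 2^-1 * ((1 + a) * (1 - b) + (1 - a) * (1 + b))); last first.
    by rewrite /e; field.
  by rewrite mulr_ge0 ?invr_ge0 ?ler0n // addr_ge0 // mulr_ge0 // ?subr_ge0 // -lerBlDl sub0r.
have gap : optimal_overlap a b = 1 - 2^-1 * (e - sqrtC d).
  by rewrite /optimal_overlap /e -/d; field.
apply/leifP; rewrite gap; case: (eqVneq a b) => [eq_ab|neq_ab].
  by rewrite /d /e -eq_ab -expr2 sqrCK ?subr_ge0 ?sqr_ile1 // subrr mulr0 subr0.
rewrite ltrBlDl ltrDr mulr_gt0 ?invr_gt0 ?ltr0n // subr_gt0.
rewrite -(sqrCK e_ge0) ltr_sqrtC ?nnegrE ?exprn_ge0 // -subr_gt0.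
have -> : e ^+ 2 - d = (a - b) ^+ 2 by rewrite /e /d; ring.
by rewrite real_exprn_even_gt0 ?realB ?ler1_real // subr_eq0 neq_ab orbT.
Qed.

End OptimalOverlap.

Section Qubit.
Variable R : realType.
Local Notation C := R[i].
Implicit Types (u v w x y e f m n : 'cV[C]_2) (U : 'M[C]_2).

Lemma braket_trace u v : braket u v = \tr (v *m u^t*).
Proof. by rewrite /braket -trace_mx11 mxtrace_mulC. Qed.

Lemma braketC u v : (braket u v)^* = braket v u.
Proof.
rewrite /braket (_ : _^* = (u^t* *m v)^t* 0 0); last by rewrite !mxE.
by rewrite trmx_mul map_mxM trmxCK.
Qed.

Lemma norm_braketC u v : `|braket u v| = `|braket v u|.
Proof. by rewrite -braketC norm_conjC. Qed.

Lemma braketDl u v w : braket (u + v) w = braket u w + braket v w.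
Proof. by rewrite /braket !raddfD /= mulmxDl mxE. Qed.

Lemma braketDr u v w : braket u (v + w) = braket u v + braket u w.
Proof. by rewrite /braket mulmxDr mxE. Qed.

Lemma braketZl (k : C) u v : braket (k *: u) v = k^* * braket u v.
Proof. by rewrite /braket !linearZ /= map_mxZ -scalemxAl mxE. Qed.

Lemma braketZr (k : C) u v : braket u (k *: v) = k * braket u v.
Proof. by rewrite /braket -scalemxAr mxE. Qed.

Lemma braketNl u v : braket (- u) v = - braket u v.
Proof. by rewrite -scaleN1r braketZl rmorphN1 mulN1r. Qed.

Lemma braketNr u v : braket u (- v) = - braket u v.
Proof. by rewrite -scaleN1r braketZr mulN1r. Qed.

Lemma braket_eq0 u : braket u u = 0 -> u = 0.
Proof.
by move/eqP; rewrite braket_trace mxtrace_mul_trmxC dnorm_eq0 mxvec_eq0 => /eqP.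
Qed.

Lemma norm_braket_unit u : unit_vec u -> `|braket u u| = 1.
Proof. by move=> ->; rewrite normr1. Qed.

Lemma norm_braket_le1 u v : unit_vec u -> unit_vec v -> `|braket u v| <= 1.
Proof.
move=> hu hv; rewrite braket_trace (le_trans (mxtrace_CauchySchwarz _ _)) //.
by rewrite -!braket_trace hu hv sqrtC1 mulr1.
Qed.

Lemma norm_braket_itv u v : unit_vec u -> unit_vec v -> -1 <= `|braket u v| <= 1.
Proof.
by move=> hu hv; rewrite norm_braket_le1 // andbT (le_trans _ (normr_ge0 _)) ?lerN10.
Qed.

Lemma braket_unitary U u v : U \is unitarymx -> braket (U *m u) (U *m v) = braket u v.
Proof.
move=> /unitarymxP /mulmx1C UtU.
by rewrite /braket trmx_mul map_mxM !mulmxA -(mulmxA _ _ U) UtU mulmx1.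
Qed.

Lemma unit_vec_unitary U u : U \is unitarymx -> unit_vec u -> unit_vec (U *m u).
Proof. by rewrite /unit_vec => hU; rewrite braket_unitary. Qed.

Lemma unit_vec_phase (k : C) u : `|k| = 1 -> unit_vec u -> unit_vec (k *: u).
Proof.
by rewrite /unit_vec braketZl braketZr mulrA -normCKC => -> ->; rewrite expr1n mulr1.
Qed.

Lemma ketbra_herm u : (ketbra u)^t* = ketbra u.
Proof. by rewrite /ketbra trmx_mul map_mxM trmxCK. Qed.

Lemma ketbra_unitary U u : U *m ketbra u *m U^t* = ketbra (U *m u).
Proof. by rewrite /ketbra trmx_mul map_mxM !mulmxA. Qed.

Lemma ketbra_phase (k : C) u : `|k| = 1 -> ketbra (k *: u) = ketbra u.
Proof.
move=> hk; rewrite /ketbra !linearZ /= map_mxZ -scalemxAl -scalemxAr scalerA.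
by rewrite -normCK hk expr1n scale1r.
Qed.

Lemma expect_ketbra u v : expect u (ketbra v) = `|braket u v| ^+ 2.
Proof.
by rewrite normCK braketC /expect /ketbra mulmxA -(mulmxA _ (v^t*)) mxE big_ord1.
Qed.

Lemma expect_sum (N : nat) (p : 'I_N -> C) (M : 'I_N -> 'M[C]_2) u :
  expect u (\sum_(i < N) p i *: M i) = \sum_(i < N) p i * expect u (M i).
Proof.
rewrite /expect mulmx_sumr mulmx_suml summxE; apply: eq_bigr => i _.
by rewrite -scalemxAr -scalemxAl mxE.
Qed.

Lemma mxtrace_ketbra u : \tr (ketbra u) = braket u u.
Proof. by rewrite braket_trace. Qed.

Lemma mxtrace_ketbraM u v : \tr (ketbra u *m ketbra v) = `|braket u v| ^+ 2.
Proof.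
by rewrite -expect_ketbra /expect -[RHS]trace_mx11 [RHS]mxtrace_mulC /ketbra !mulmxA.
Qed.

(* Rewriting with [mxtrace_ketbraM] in a goal holding several distinct traces
   makes unification unfold [\tr]; [congr] first isolates each trace. *)
Lemma mxtrace_ketbraDB1 e f x y :
    unit_vec e -> unit_vec f -> unit_vec x -> unit_vec y ->
  \tr ((ketbra e + ketbra f - 1%:M) *m (ketbra x + ketbra y - 1%:M)) =
  `|braket e x| ^+ 2 + `|braket e y| ^+ 2 + `|braket f x| ^+ 2 + `|braket f y| ^+ 2 - 2.
Proof.
move=> he hf hx hy; rewrite mxtrace_mulDB1 !mxtrace_ketbra he hf hx hy.
by congr (_ + _ + _ + _ + _); rewrite ?mxtrace_ketbraM //; ring.
Qed.

Lemma mxtrace_ketbraBB e f x y :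
  \tr ((ketbra e - ketbra f) *m (ketbra x - ketbra y)) =
  `|braket e x| ^+ 2 - `|braket e y| ^+ 2 - `|braket f x| ^+ 2 + `|braket f y| ^+ 2.
Proof. by rewrite mxtrace_mulBB; congr (_ - _ - _ + _); apply: mxtrace_ketbraM. Qed.

Lemma mxtrace_ketbraDB1_sqr e f : unit_vec e -> unit_vec f ->
  \tr ((ketbra e + ketbra f - 1%:M) *m (ketbra e + ketbra f - 1%:M)) =
  2 * `|braket e f| ^+ 2.
Proof.
move=> he hf; rewrite mxtrace_ketbraDB1 // (norm_braketC f) !norm_braket_unit //.
by ring.
Qed.

Lemma mxtrace_ketbraBB_sqr e f : unit_vec e -> unit_vec f ->
  \tr ((ketbra e - ketbra f) *m (ketbra e - ketbra f)) = 2 * (1 - `|braket e f| ^+ 2).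
Proof.
by move=> he hf; rewrite mxtrace_ketbraBB (norm_braketC f) !norm_braket_unit //; ring.
Qed.

Lemma mean_fidelity_le_optimal_overlap e f x y :
    unit_vec e -> unit_vec f -> unit_vec x -> unit_vec y ->
  2^-1 * `|braket e x| ^+ 2 + 2^-1 * `|braket f y| ^+ 2 <=
  optimal_overlap `|braket x y| `|braket e f|.
Proof.
move=> he hf hx hy.
have herm_sum u v : (ketbra u + ketbra v - 1%:M)^t* = ketbra u + ketbra v - 1%:M.
  by rewrite !(raddfD, raddfN) /= trmx1 map_mx1 !ketbra_herm.
have herm_diff u v : (ketbra u - ketbra v)^t* = ketbra u - ketbra v.
  by rewrite !(raddfD, raddfN) /= !ketbra_herm.
have cs_sum : `|braket e x| ^+ 2 + `|braket e y| ^+ 2 + `|braket f x| ^+ 2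
    + `|braket f y| ^+ 2 - 2 <=
    sqrtC (2 * `|braket e f| ^+ 2) * sqrtC (2 * `|braket x y| ^+ 2).
  rewrite -mxtrace_ketbraDB1 // -mxtrace_ketbraDB1_sqr //.
  by rewrite -mxtrace_ketbraDB1_sqr // mxtrace_herm_CauchySchwarz.
have cs_diff : `|braket e x| ^+ 2 - `|braket e y| ^+ 2 - `|braket f x| ^+ 2
    + `|braket f y| ^+ 2 <=
    sqrtC (2 * (1 - `|braket e f| ^+ 2)) * sqrtC (2 * (1 - `|braket x y| ^+ 2)).
  rewrite -mxtrace_ketbraBB -mxtrace_ketbraBB_sqr //.
  by rewrite -mxtrace_ketbraBB_sqr // mxtrace_herm_CauchySchwarz.
have sqr_le1 u v : unit_vec u -> unit_vec v -> 0 <= 1 - `|braket u v| ^+ 2.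
  by move=> hu hv; rewrite subr_ge0 exprn_ile1 ?norm_braket_le1.
have sqrtC2M (z : C) : 0 <= z -> sqrtC (2 * z) = sqrtC 2 * sqrtC z.
  by move=> z_ge0; rewrite sqrtCM ?nnegrE ?ler0n.
rewrite !sqrtC2M ?exprn_ge0 // mulrACA -expr2 sqrtCK !sqrCK // in cs_sum.
rewrite !sqrtC2M ?sqr_le1 // mulrACA -expr2 sqrtCK in cs_diff.
rewrite -sqrtCM ?nnegrE ?sqr_le1 // [X in sqrtC X]mulrC in cs_diff.
move: cs_sum cs_diff; rewrite /optimal_overlap.
move: `|braket e x| `|braket e y| `|braket f x| `|braket f y| `|braket x y| `|braket e f|.
move=> p q r s a b cs_sum cs_diff; rewrite -subr_ge0.
(* the slack of the claim is a quarter of the total slack of the two bounds *)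
rewrite (_ : _ - _ = 4^-1 * (2 * (b * a) + 2 * sqrtC ((1 - a ^+ 2) * (1 - b ^+ 2))
  - ((p ^+ 2 + q ^+ 2 + r ^+ 2 + s ^+ 2 - 2) + (p ^+ 2 - q ^+ 2 - r ^+ 2 + s ^+ 2)))).
  by rewrite mulr_ge0 ?invr_ge0 ?ler0n // subr_ge0 lerD.
by field.
Qed.

Definition coord2 (a b : C) : 'M[C]_(1 + 1, 1) := col_mx a%:M b%:M.

Lemma coord2E u : u = coord2 (u 0 0) (u 1 0).
Proof.
apply/matrixP => i j; rewrite ord1 /coord2 mxE.
by case: splitP => k; rewrite ord1 mxE eqxx mulr1n => hi; congr (u _ _); apply: val_inj.
Qed.

Lemma mul_row_mx_coord2 m n a b : row_mx m n *m coord2 a b = a *: m + b *: n.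
Proof. by rewrite mul_row_col !mul_mx_scalar. Qed.

Lemma braket_coord2 a b c d : braket (coord2 a b) (coord2 c d) = a^* * c + b^* * d.
Proof.
rewrite /braket -[LHS]/(((coord2 a b)^t* *m coord2 c d : 'M_1) 0 0).
rewrite tr_col_mx map_row_mx mul_row_col !tr_scalar_mx !map_scalar_mx /=.
by rewrite -!scalar_mxM mxE [X in _ + X]mxE !mxE mulr1n.
Qed.

Lemma trmxC_mul_braket u v : u^t* *m v = (braket u v)%:M.
Proof. exact: mx11_scalar. Qed.

Lemma row_mx_unitary m n : unit_vec m -> unit_vec n -> braket m n = 0 ->
  row_mx m n \is unitarymx.
Proof.
move=> hm hn hmn; have hnm : braket n m = 0 by rewrite -braketC hmn conjC0.
have : (row_mx m n)^t* *m row_mx m n = 1%:M :> 'M_(1 + 1).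
  rewrite tr_row_mx map_col_mx mul_col_row !trmxC_mul_braket hm hn hmn hnm.
  by rewrite raddf0 -scalar_mx_block.
by move/mulmx1C/unitarymxP.
Qed.

Lemma exists_orthogonal_unit u : unit_vec u -> exists2 v, unit_vec v & braket u v = 0.
Proof.
have [a [b ->]] : exists a b, u = coord2 a b by exists (u 0 0), (u 1 0); exact: coord2E.
rewrite /unit_vec braket_coord2 => hu; exists (coord2 (- b^*) a^*).
  by rewrite /unit_vec braket_coord2 rmorphN /= !conjCK -hu; ring.
by rewrite braket_coord2; ring.
Qed.

Lemma exists_symmetric_frame x y a : unit_vec x -> unit_vec y ->
    braket x y = a -> 0 <= a ->
  exists2 W : 'M[C]_(2, 1 + 1), W \is unitarymx &
    x = W *m coord2 (hcos a) (hsin a) /\ y = W *m coord2 (hcos a) (- hsin a).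
Proof.
move=> hx hy hxy a_ge0.
have a_le1 : a <= 1 by rewrite -(ger0_norm a_ge0) -hxy norm_braket_le1.
have hyx : braket y x = a by rewrite -braketC hxy geC0_conj.
have gram_sum : braket (x + y) (x + y) = 2 * (1 + a).
  by rewrite braketDl !braketDr hx hy hxy hyx; ring.
have gram_diff : braket (x - y) (x - y) = 2 * (1 - a).
  by rewrite braketDl !braketDr !braketNl !braketNr hx hy hxy hyx; ring.
have gram_cross : braket (x + y) (x - y) = 0.
  by rewrite braketDl !braketDr !braketNr hx hy hxy hyx; ring.
case: (eqVneq a 1) => [a_eq1 | a_neq1].
  have <- : x = y.
    apply/eqP; rewrite -subr_eq0; apply/eqP/braket_eq0.
    by rewrite gram_diff a_eq1 subrr mulr0.
  have [n hn hxn] := exists_orthogonal_unit hx.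
  exists (row_mx x n); first exact: row_mx_unitary.
  rewrite !mul_row_mx_coord2 a_eq1 /hcos /hsin subrr mul0r sqrtC0 scale0r oppr0.
  have -> : (1 + 1) / 2 = 1 :> C by field.
  by rewrite scale0r !addr0 sqrtC1 scale1r.
have c_gt0 : 0 < hcos a.
  by rewrite sqrtC_gt0 divr_gt0 ?ltr0n // (lt_le_trans ltr01) // lerDl.
have s_gt0 : 0 < hsin a.
  by rewrite sqrtC_gt0 divr_gt0 ?ltr0n // subr_gt0 lt_neqAle a_neq1.
have c_neq0 := lt0r_neq0 c_gt0; have s_neq0 := lt0r_neq0 s_gt0.
have sum_sq : 1 + a = 2 * hcos a ^+ 2 by rewrite sqrtCK; field.
have diff_sq : 1 - a = 2 * hsin a ^+ 2 by rewrite sqrtCK; field.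
have inv_real (z : C) : 0 < z -> ((2 * z)^-1)^* = (2 * z)^-1.
  by move=> z_gt0; rewrite geC0_conj // invr_ge0 mulr_ge0 ?ler0n ?ltW.
exists (row_mx ((2 * hcos a)^-1 *: (x + y)) ((2 * hsin a)^-1 *: (x - y))).
  apply: row_mx_unitary; last by rewrite braketZl braketZr gram_cross !mulr0.
  - by rewrite /unit_vec braketZl braketZr inv_real // gram_sum sum_sq; field.
  - by rewrite /unit_vec braketZl braketZr inv_real // gram_diff diff_sq; field.
have half (z : C) : z != 0 -> z / (2 * z) = 2^-1 by move=> z_neq0; field.
rewrite !mul_row_mx_coord2 !scalerA mulNr !half //.
by split; apply/matrixP => i j; rewrite !mxE; field.
Qed.

Lemma exists_phase (z : C) : exists2 k : C, `|k| = 1 & k * z = `|z|.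
Proof.
have [->|z_neq0] := eqVneq z 0; first by exists 1; rewrite ?normr1 ?mulr0 ?normr0.
exists (`|z| / z); last by rewrite divfK.
by rewrite normf_div normr_id divff // normr_eq0.
Qed.

Lemma exists_optimal_unitary psi phi e f :
    unit_vec psi -> unit_vec phi -> unit_vec e -> unit_vec f ->
  let k := optimal_amplitude `|braket psi phi| `|braket e f| in
  exists2 U, U \is unitarymx &
    [/\ `|braket e (U *m psi)| = k, `|braket f (U *m phi)| = k &
        `|braket psi phi| = `|braket e f| ->
        ketbra (U *m psi) = ketbra e /\ ketbra (U *m phi) = ketbra f].
Proof.
move=> hpsi hphi he hf k.
have [w hw w_phi] := exists_phase (braket psi phi).
have [w' hw' w'_f] := exists_phase (braket e f).
have [W1 W1u [psiE phiE]] := exists_symmetric_frame hpsi (unit_vec_phase hw hphi)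
  (etrans (braketZr _ _ _) w_phi) (normr_ge0 _).
have [W2 W2u [eE fE]] := exists_symmetric_frame he (unit_vec_phase hw' hf)
  (etrans (braketZr _ _ _) w'_f) (normr_ge0 _).
have frame_change v : W2 *m W1^t* *m (W1 *m v) = W2 *m v.
  by rewrite mulmxA (mulmxKtV _ W1u).
exists (W2 *m W1^t*).
  apply: mul_unitarymx W2u _; apply/unitarymxP; rewrite trmxCK.
  by apply: mulmx1C; apply/unitarymxP.
have Upsi : W2 *m W1^t* *m psi =
    W2 *m coord2 (hcos `|braket psi phi|) (hsin `|braket psi phi|).
  by rewrite {1}psiE frame_change.
have Uphi : W2 *m W1^t* *m (w *: phi) =
    W2 *m coord2 (hcos `|braket psi phi|) (- hsin `|braket psi phi|).
  by rewrite phiE frame_change.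
have hcos_braket_ge0 u v : unit_vec u -> unit_vec v -> 0 <= hcos `|braket u v|.
  by move=> hu hv; rewrite hcos_ge0 //; case/andP: (norm_braket_itv hu hv).
have hsin_braket_ge0 u v : unit_vec u -> unit_vec v -> 0 <= hsin `|braket u v|.
  by move=> hu hv; rewrite hsin_ge0 // norm_braket_le1.
have k_ge0 : 0 <= k.
  by rewrite addr_ge0 // mulr_ge0 ?hcos_braket_ge0 ?hsin_braket_ge0.
have kC : hcos `|braket e f| * hcos `|braket psi phi|
    + hsin `|braket e f| * hsin `|braket psi phi| = k.
  by rewrite /k /optimal_amplitude mulrC [_ * hsin _]mulrC.
split.
- rewrite Upsi {1}eE braket_unitary // braket_coord2.
  by rewrite !geC0_conj ?hcos_braket_ge0 ?hsin_braket_ge0 // kC ger0_norm.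
- have -> : `|braket f (W2 *m W1^t* *m phi)| =
      `|braket (w' *: f) (W2 *m W1^t* *m (w *: phi))|.
    by rewrite braketZl -scalemxAr braketZr !normrM norm_conjC hw hw' !mul1r.
  rewrite Uphi fE braket_unitary // braket_coord2 rmorphN /=.
  by rewrite !geC0_conj ?hcos_braket_ge0 ?hsin_braket_ge0 // mulrNN kC ger0_norm.
move=> ab; rewrite ab in Upsi Uphi; split; first by rewrite Upsi -eE.
by rewrite -(ketbra_phase _ hw) scalemxAr Uphi -fE ketbra_phase.
Qed.

Lemma opt_valueE psi phi e f :
  opt_value psi phi e f = optimal_overlap `|braket psi phi| `|braket e f|.
Proof. by []. Qed.

Lemma success_unitary U psi phi e f :
  success (fun A => U *m A *m U^t*) psi phi e f =
  2^-1 * `|braket e (U *m psi)| ^+ 2 + 2^-1 * `|braket f (U *m phi)| ^+ 2.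
Proof. by rewrite /success !ketbra_unitary !expect_ketbra. Qed.

Lemma success_random_unitary (N : nat) (p : 'I_N -> C) (U : 'I_N -> 'M[C]_2)
    Psi psi phi e f :
    (forall A, Psi A = \sum_(i < N) p i *: (U i *m A *m (U i)^t*)) ->
  success Psi psi phi e f =
  \sum_(i < N) p i * success (fun A => U i *m A *m (U i)^t*) psi phi e f.
Proof.
move=> PsiE; rewrite /success !PsiE !expect_sum !mulr_sumr -big_split /=.
by apply: eq_bigr => i _; rewrite mulrDr !(mulrCA (p i)).
Qed.

Lemma success_le_opt_value Psi psi phi e f :
    unit_vec psi -> unit_vec phi -> unit_vec e -> unit_vec f ->
  random_unitary_channel Psi -> success Psi psi phi e f <= opt_value psi phi e f.
Proof.
move=> hpsi hphi he hf [N [p [U [p_ge0 p_sum1 U_unitary PsiE]]]].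
rewrite (success_random_unitary _ _ _ _ PsiE) -[opt_value _ _ _ _]mul1r -p_sum1.
rewrite mulr_suml; apply: ler_sum => i _; rewrite ler_wpM2l // success_unitary.
rewrite opt_valueE -(braket_unitary psi phi (U_unitary i)).
by apply: mean_fidelity_le_optimal_overlap => //; apply: unit_vec_unitary.
Qed.

Lemma unitary_random_unitary_channel U : U \is unitarymx ->
  random_unitary_channel (fun A => U *m A *m U^t*).
Proof.
move=> hU; exists 1%N, (fun=> 1), (fun=> U).
by split=> // [|A]; rewrite big_ord1 ?scale1r.
Qed.

End Qubit.

Theorem corollary2 (R : realType) (psi phi e f : 'cV[R[i]]_2) :
  unit_vec psi -> unit_vec phi -> unit_vec e -> unit_vec f ->
  [/\ (* the maximum over R is attained and equals the closed form *)
      (exists Psi, random_unitary_channel Psi /\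
                   success Psi psi phi e f = opt_value psi phi e f),
      (forall Psi, random_unitary_channel Psi ->
                   success Psi psi phi e f <= opt_value psi phi e f),
      (opt_value psi phi e f = 1 <-> `|braket psi phi| = `|braket e f|) &
      (jointly_convertible (@random_unitary_channel R) psi phi e f <->
         `|braket psi phi| = `|braket e f|)].
Proof.
move=> hpsi hphi he hf.
have opt_leif := optimal_overlap_leif (norm_braket_itv hpsi hphi) (norm_braket_itv he hf).
have opt_eq1 : opt_value psi phi e f = 1 <-> `|braket psi phi| = `|braket e f|.
  rewrite opt_valueE; split=> [/eqP|ab]; first by rewrite opt_leif.2 => /eqP.
  by apply/eqP; rewrite opt_leif.2 ab.
have [U hU [e_amp f_amp convert]] := exists_optimal_unitary hpsi hphi he hf.
split=> //.
- exists (fun A => U *m A *m U^t*); split; first exact: unitary_random_unitary_channel.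
  rewrite success_unitary e_amp f_amp opt_valueE.
  by rewrite -sqr_optimal_amplitude ?norm_braket_itv //; field.
- by move=> Psi; apply: success_le_opt_value.
split=> [[Psi [hPsi [Psi_psi Psi_phi]]] | ab].
  apply/opt_eq1/eqP; rewrite eq_le opt_valueE opt_leif.1 -opt_valueE /=.
  have <- : success Psi psi phi e f = 1.
    by rewrite /success Psi_psi Psi_phi !expect_ketbra !norm_braket_unit // expr1n; field.
  exact: success_le_opt_value.
exists (fun A => U *m A *m U^t*); split; first exact: unitary_random_unitary_channel.
by rewrite !ketbra_unitary; apply: convert.
Qed.
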